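(* Let $A,B$ be automata, $R\subseteq\mathrm{states}(A)\times\mathrm{states}(B)$, and suppose the execution fragments $\alpha$ of $A$ and $\alpha'$ of $B$ are $R$-related via an index relation $I$. Then $\alpha'$ has a prefix $\alpha''$ (an execution fragment that is an initial segment of $\alpha'$, possibly $\alpha'$ itself) such that $\alpha$ and $\alpha''$ are $R$-related via a reduced index relation $J\subseteq I$.
   Context: An automaton $A$ consists of a set $\mathrm{states}(A)$ of states, a nonempty set $\mathrm{start}(A)\subseteq\mathrm{states}(A)$ of start states, a set $\mathrm{acts}(A)$ of actions containing a distinguished internal action $\tau$, and a set $\mathrm{steps}(A)\subseteq\mathrm{states}(A)\times\mathrm{acts}(A)\times\mathrm{states}(A)$ of steps; write $s\xrightarrow{a}_A t$ for $(s,a,t)\in\mathrm{steps}(A)$. An execution fragment of $A$ is a finite or infinite alternating sequence $s_0a_1s_1a_2s_2\cdots$ of states and actions, beginning with a state and, if finite, ending with a state, such that $s_{i-1}\xrightarrow{a_i}_A s_i$ for all $i>0$; its index set $\mathrm{Index}(\alpha)$ is the set of indices $i$ of its states $s_i$. Execution correspondence: Let $R\subseteq\mathrm{states}(A)\times\mathrm{states}(B)$ and let $\alpha=s_0a_1s_1\cdots$ and $\alpha'=u_0b_1u_1\cdots$ be execution fragments of $A$ and $B$. An index relation over $R$ between $\alpha$ and $\alpha'$ is a relation $I\subseteq\mathrm{Index}(\alpha)\times\mathrm{Index}(\alpha')$ such that (1) $(i,j)\in I$ implies $(s_i,u_j)\in R$; (2) $(i,j)\in I$, $(i',j')\in I$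 and $i<i'$ imply $j\le j'$; (3) every index of $\alpha$ is related by $I$ to some index of $\alpha'$ and every index of $\alpha'$ is related by $I$ to some index of $\alpha$; (4) if $(i,j),(i+1,j+1)\in I$ then $a_{i+1}=b_{j+1}$; if $(i,j),(i+1,j)\in I$ then $a_{i+1}=\tau$; if $(i,j),(i,j+1)\in I$ then $b_{j+1}=\tau$. The fragments $\alpha,\alpha'$ are $R$-related via $I$ if $I$ is such an index relation. An index relation $I$ between $\alpha$ and $\alpha'$ is reduced if (1) when $\alpha$ is finite, $I$ relates the final index of $\alpha$ only to the final index of $\alpha'$ (in particular $\alpha'$ is then finite); and (2) $I$ is N-free: $(i,j)\in I$ and $(i+1,j+1)\in I$ imply $(i+1,j)\notin I$ and $(i,j+1)\notin I$. *)

From Stdlib Require Import Arith Lia.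

(* Automata over a common action universe [Act] with a distinguished internal
   action [tau] (shared by all automata, so actions of A and B can be compared). *)
Record automaton (Act : Type) (tau : Act) := Automaton {
  state : Type;
  start : state -> Prop;
  acts : Act -> Prop;
  steps : state -> Act -> state -> Prop;
  start_nonempty : exists s, start s;
  acts_tau : acts tau;
  steps_acts : forall s a t, steps s a t -> acts a
}.
Arguments state {Act tau}.
Arguments start {Act tau}.
Arguments acts {Act tau}.
Arguments steps {Act tau}.

(* Length of a fragment: [Some n] = finite with states s_0..s_n,
   [None] = infinite. *)
Definition in_index (len : option nat) (i : nat) : Prop :=
  match len with None => True | Some n => i <= n end.

(* The sequence s_0 a_1 s_1 a_2 s_2 ... given by state sequence [s],
   action sequence [a] (a (i+1) is the action between s i and s (i+1);
   a 0 and values past the end are irrelevant) and length [len]. *)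
Definition is_frag {Act tau} (A : automaton Act tau)
  (s : nat -> state A) (a : nat -> Act) (len : option nat) : Prop :=
  forall i, in_index len (i + 1) -> steps A (s i) (a (i + 1)) (s (i + 1)).

(* The fragment with length [len''] (same sequences) is an initial segment
   (prefix) of the fragment with length [len']. *)
Definition prefix_len (len'' len' : option nat) : Prop :=
  match len'' with
  | None => len' = None
  | Some m => in_index len' m
  end.

Definition index_relation {Act tau} {A B : automaton Act tau}
  (R : state A -> state B -> Prop)
  (s : nat -> state A) (a : nat -> Act) (len : option nat)
  (u : nat -> state B) (b : nat -> Act) (len' : option nat)
  (I : nat -> nat -> Prop) : Prop :=
  (forall i j, I i j -> in_index len i /\ in_index len' j) /\
  (forall i j, I i j -> R (s i) (u j)) /\
  (forall i j i' j', I i j -> I i' j' -> i < i' -> j <= j') /\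
  (forall i, in_index len i -> exists j, I i j) /\
  (forall j, in_index len' j -> exists i, I i j) /\
  (forall i j, I i j -> I (i + 1) (j + 1) -> a (i + 1) = b (j + 1)) /\
  (forall i j, I i j -> I (i + 1) j -> a (i + 1) = tau) /\
  (forall i j, I i j -> I i (j + 1) -> b (j + 1) = tau).

Definition reduced (len len' : option nat) (I : nat -> nat -> Prop) : Prop :=
  (forall n, len = Some n -> forall j, I n j -> len' = Some j) /\
  (forall i j, I i j -> I (i + 1) (j + 1) -> ~ I (i + 1) j /\ ~ I i (j + 1)).

(** Draw [I] in the grid of index pairs, [i] (indices of [α]) horizontal and
    [j] (indices of [α']) vertical: monotonicity makes it a staircase, and an
    N-shape is a corner where the staircase turns, right then up or up then
    right, between two diagonal neighbours.  If [α] ends at [n], keep only the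
    pairs with [j <= m] for the least [m] related to [n]: this cuts [α'] to a
    prefix whose last index is the only partner of [n].  Deleting the turning
    corners then makes the relation N-free, and it still covers every index
    because both neighbours of a deleted corner survive; this needs that a
    right-up corner next to an up-right corner is kept. *)

From Stdlib Require Import Arith Lia Classical Wf_nat.

Lemma in_index_le (len : option nat) i j : in_index len i -> j <= i -> in_index len j.
Proof. destruct len; simpl; lia. Qed.

Lemma prefix_len_refl (len : option nat) : prefix_len len len.
Proof. destruct len as [n|]; simpl; auto. Qed.

Lemma is_frag_prefix {Act tau} (A : automaton Act tau) s a (len'' len' : option nat) :
  prefix_len len'' len' -> is_frag A s a len' -> is_frag A s a len''.
Proof.
  intros Hpre Hfrag i Hi; apply Hfrag.
  destruct len'' as [m|]; simpl in Hpre, Hi.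
  - exact (in_index_le len' m (i + 1) Hpre Hi).
  - now subst.
Qed.

Lemma least_nat_ex (P : nat -> Prop) :
  (exists n, P n) -> exists m, P m /\ forall k, P k -> m <= k.
Proof.
  intros Hex.
  destruct (dec_inh_nat_subset_has_unique_least_element P (fun n => classic (P n)) Hex)
    as [m [Hm _]].
  now exists m.
Qed.

Section CornerCutting.

Variable I : nat -> nat -> Prop.

Hypothesis I_monotone : forall i j i' j', I i j -> I i' j' -> i < i' -> j <= j'.

Definition up_right_corner i j :=
  exists j0, j = j0 + 1 /\ I i j0 /\ I i j /\ I (i + 1) j.

(* A right-up corner is kept when a neighbour of it is an up-right corner:
   deleting both would empty a row or a column of the staircase. *)
Definition lone_right_up_corner i j :=
  exists i0, i = i0 + 1 /\ I i0 j /\ I i j /\ I i (j + 1) /\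
    ~ up_right_corner i0 j /\ ~ up_right_corner i (j + 1).

Definition cut_corners i j :=
  I i j /\ ~ up_right_corner i j /\ ~ lone_right_up_corner i j.

Lemma cut_corners_sub i j : cut_corners i j -> I i j.
Proof. now intros []. Qed.

Lemma cut_corners_N_free i j :
  cut_corners i j -> cut_corners (i + 1) (j + 1) ->
  ~ cut_corners (i + 1) j /\ ~ cut_corners i (j + 1).
Proof.
  intros (Hij & Hnur & _) (Hij1 & Hnur1 & _); split.
  - intros (Hi1j & _ & Hnlone). apply Hnlone.
    exists i; repeat split; assumption.
  - intros (Hij' & Hnur' & _). apply Hnur'.
    exists j; repeat split; assumption.
Qed.

Lemma up_right_corner_below i j0 : up_right_corner i (j0 + 1) -> cut_corners i j0.
Proof.
  intros (j1 & Hj & Hij0 & Hij & Hi1j). replace j1 with j0 in * by lia.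
  repeat split; [exact Hij0| |].
  - intros (_ & _ & _ & _ & Hi1j0).
    pose proof (I_monotone _ _ _ _ Hij Hi1j0 ltac:(lia)); lia.
  - intros (_ & _ & _ & _ & _ & _ & Hnur). apply Hnur.
    exists j0; repeat split; assumption.
Qed.

Lemma up_right_corner_right i j : up_right_corner i j -> cut_corners (i + 1) j.
Proof.
  intros Hur. pose proof Hur as (j0 & -> & _ & Hij & Hi1j).
  repeat split; [exact Hi1j| |].
  - intros (j1 & Hj & Hi1j1 & _ & _). replace j1 with j0 in * by lia.
    pose proof (I_monotone _ _ _ _ Hij Hi1j1 ltac:(lia)); lia.
  - intros (i0 & Hi & _ & _ & _ & Hnur & _). replace i0 with i in * by lia.
    exact (Hnur Hur).
Qed.

Lemma lone_right_up_corner_above i j : lone_right_up_corner i j -> cut_corners i (j + 1).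
Proof.
  intros (i0 & -> & _ & Hij & Hij1 & _ & Hnur).
  repeat split; [exact Hij1|exact Hnur|].
  intros (i1 & Hi & Hi1j1 & _ & _ & _ & _). replace i1 with i0 in * by lia.
  pose proof (I_monotone _ _ _ _ Hi1j1 Hij ltac:(lia)); lia.
Qed.

Lemma lone_right_up_corner_left i0 j :
  lone_right_up_corner (i0 + 1) j -> cut_corners i0 j.
Proof.
  intros (i1 & Hi & Hi1j & Hij & _ & Hnur & _). replace i1 with i0 in * by lia.
  repeat split; [exact Hi1j|exact Hnur|].
  intros (_ & _ & _ & _ & Hi0j1 & _ & _).
  pose proof (I_monotone _ _ _ _ Hi0j1 Hij ltac:(lia)); lia.
Qed.

Lemma cut_corners_cover_row i j : I i j -> exists j', cut_corners i j'.
Proof.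
  intros Hij.
  destruct (classic (up_right_corner i j)) as [Hur|Hnur].
  - pose proof Hur as (j0 & -> & _).
    exists j0; exact (up_right_corner_below i j0 Hur).
  - destruct (classic (lone_right_up_corner i j)) as [Hlone|Hnlone].
    + exists (j + 1); exact (lone_right_up_corner_above i j Hlone).
    + exists j; repeat split; assumption.
Qed.

Lemma cut_corners_cover_column i j : I i j -> exists i', cut_corners i' j.
Proof.
  intros Hij.
  destruct (classic (up_right_corner i j)) as [Hur|Hnur].
  - exists (i + 1); exact (up_right_corner_right i j Hur).
  - destruct (classic (lone_right_up_corner i j)) as [Hlone|Hnlone].
    + pose proof Hlone as (i0 & -> & _).
      exists i0; exact (lone_right_up_corner_left i0 j Hlone).
    + exists i; repeat split; assumption.
Qed.

End CornerCutting.

Section IndexRelations.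

Context {Act : Type} {tau : Act} {A B : automaton Act tau}.
Variable R : state A -> state B -> Prop.
Variables (s : nat -> state A) (a : nat -> Act) (u : nat -> state B) (b : nat -> Act).

Lemma index_relation_sub len len' len'' (I J : nat -> nat -> Prop) :
  index_relation R s a len u b len' I ->
  (forall i j, J i j -> I i j) ->
  (forall i j, J i j -> in_index len'' j) ->
  (forall i, in_index len i -> exists j, J i j) ->
  (forall j, in_index len'' j -> exists i, J i j) ->
  index_relation R s a len u b len'' J.
Proof.
  intros (Hbound & HR & Hmono & _ & _ & Hsync & HtauA & HtauB) HJI HJbound HcovA HcovB.
  repeat split; eauto.
  apply (Hbound i j), HJI; assumption.
Qed.

Lemma index_relation_cut_corners len len' I :
  index_relation R s a len u b len' I ->
  index_relation R s a len u b len' (cut_corners I).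
Proof.
  intros HI. pose proof HI as (Hbound & _ & Hmono & HcovA & HcovB & _).
  apply (index_relation_sub len len' len' I); [exact HI|apply cut_corners_sub| | |].
  - intros i j Hj; apply (Hbound i j), cut_corners_sub, Hj.
  - intros i Hi. destruct (HcovA i Hi) as [j Hij].
    exact (cut_corners_cover_row I Hmono i j Hij).
  - intros j Hj. destruct (HcovB j Hj) as [i Hij].
    exact (cut_corners_cover_column I Hmono i j Hij).
Qed.

Lemma index_relation_truncate n len' I m :
  index_relation R s a (Some n) u b len' I -> I n m ->
  index_relation R s a (Some n) u b (Some m) (fun i j => I i j /\ j <= m).
Proof.
  intros HI Hnm. pose proof HI as (Hbound & _ & Hmono & HcovA & HcovB & _).
  apply (index_relation_sub (Some n) len' (Some m) I); [exact HI|now intros i j []| | |].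
  - now intros i j [].
  - intros i Hi; simpl in Hi.
    destruct (Nat.eq_dec i n) as [->|Hne]; [now exists m|].
    destruct (HcovA i ltac:(simpl; lia)) as [j Hij].
    exists j; split; [exact Hij|]. exact (Hmono _ _ _ _ Hij Hnm ltac:(lia)).
  - intros j Hj; simpl in Hj.
    assert (Hm : in_index len' m) by exact (proj2 (Hbound n m Hnm)).
    destruct (HcovB j (in_index_le len' m j Hm Hj)) as [i Hij].
    now exists i.
Qed.

End IndexRelations.

Theorem mainTheorem11 (Act : Type) (tau : Act) (A B : automaton Act tau)
  (R : state A -> state B -> Prop)
  (s : nat -> state A) (a : nat -> Act) (len : option nat)
  (u : nat -> state B) (b : nat -> Act) (len' : option nat)
  (I : nat -> nat -> Prop) :
  is_frag A s a len -> is_frag B u b len' ->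
  index_relation R s a len u b len' I ->
  exists len'' : option nat,
    prefix_len len'' len' /\ is_frag B u b len'' /\
    exists J : nat -> nat -> Prop,
      (forall i j, J i j -> I i j) /\
      index_relation R s a len u b len'' J /\
      reduced len len'' J.
Proof.
  intros _ Hfrag HI.
  destruct len as [n|].
  - pose proof HI as (Hbound & _ & _ & HcovA & _).
    destruct (least_nat_ex (I n) (HcovA n ltac:(simpl; lia))) as (m & Hnm & Hleast).
    set (Itrunc := fun i j => I i j /\ j <= m).
    assert (Hpre : prefix_len (Some m) len') by exact (proj2 (Hbound n m Hnm)).
    exists (Some m); split; [exact Hpre|split; [exact (is_frag_prefix B u b _ _ Hpre Hfrag)|]].
    exists (cut_corners Itrunc); split; [now intros i j [[]]|].
    split; [exact (index_relation_cut_corners R s a u b _ _ _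
                     (index_relation_truncate R s a u b n len' I m HI Hnm))|].
    split; [|exact (cut_corners_N_free Itrunc)].
    intros n' Hn j [[Hnj Hjm] _]; injection Hn as <-.
    specialize (Hleast j Hnj); f_equal; lia.
  - exists len'; split; [apply prefix_len_refl|split; [exact Hfrag|]].
    exists (cut_corners I); split; [apply cut_corners_sub|].
    split; [exact (index_relation_cut_corners R s a u b _ _ _ HI)|].
    split; [discriminate|exact (cut_corners_N_free I)].
Qed.
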